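(* Let $p:(S_1,\le)\to(S_2,\le)$ be a bijective monotone map of posets, and let $\mathbb{B}p:\mathbb{B}(S_1,\le)\to\mathbb{B}(S_2,\le)$ be its $\mathbb{B}$-linear extension. If $\sigma:\mathbb{B}(S_2,\le)\to\mathbb{B}(S_1,\le)$ is a monotone map (for inclusion) with $\mathbb{B}p\circ\sigma=\mathrm{id}$, then $\sigma$ is right adjoint to $\mathbb{B}p$ (i.e. $L\subseteq\sigma(L')$ iff $\mathbb{B}p(L)\subseteq L'$) and $\sigma$ is $\mathbb{B}$-linear.
   Context: $\mathbb{B}=\{-\infty,0\}$ is the Boolean semifield; $\mathbb{B}$-modules are join-semilattices with least element and $\mathbb{B}$-linear maps preserve finite joins. For a poset $(S,\le)$, $\mathbb{B}(S,\le)$ is the set of lower subsets of $S$ that are the downward closure of a finite subset, with operation union and ordered by inclusion. For monotone $p$, $\mathbb{B}p$ sends the downward closure of a finite set $F$ to the downward closure of $p(F)$. *)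

From HB Require Import structures.
From Stdlib Require Import FunctionalExtensionality PropExtensionality.
From mathcomp Require Import all_boot all_order.
Set Implicit Arguments. Unset Strict Implicit. Unset Printing Implicit Defensive.
Import Order.Theory.
Local Open Scope order_scope.

Definition psub (T : Type) (A B : T -> Prop) : Prop := forall x, A x -> B x.

Definition dclos {d : Order.disp_t} {S : porderType d} (F : seq S) : S -> Prop :=
  fun x => exists2 y, y \in F & x <= y.

Definition fg_lower {d : Order.disp_t} {S : porderType d} (L : S -> Prop) : Prop :=
  exists F : seq S, L = dclos F.

(* B(S, <=) : the finitely generated lower subsets of S, ordered by inclusion *)
Definition BS {d : Order.disp_t} (S : porderType d) : Type :=
  {L : S -> Prop | fg_lower L}.

Definition BSval {d : Order.disp_t} {S : porderType d} (L : BS S) : S -> Prop :=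
  proj1_sig L.

Definition BSle {d : Order.disp_t} {S : porderType d} (L L' : BS S) : Prop :=
  psub (BSval L) (BSval L').

Definition BSbot {d : Order.disp_t} (S : porderType d) : BS S :=
  exist _ (dclos [::]) (ex_intro _ [::] erefl).

Lemma fg_lower_union {d : Order.disp_t} {S : porderType d} (L L' : S -> Prop) :
  fg_lower L -> fg_lower L' -> fg_lower (fun x => L x \/ L' x).
Proof.
move=> [F ->] [F' ->]; exists (F ++ F').
apply: functional_extensionality => x; apply: propositional_extensionality.
split.
- by case=> -[y yF xy]; exists y => //; rewrite mem_cat yF ?orbT.
- by case=> y; rewrite mem_cat => /orP [yF|yF] xy; [left|right]; exists y.
Qed.

(* the B-module operation on B(S): union *)
Definition BSjoin {d : Order.disp_t} {S : porderType d} (L L' : BS S) : BS S :=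
  exist _ (fun x => BSval L x \/ BSval L' x)
    (fg_lower_union (proj2_sig L) (proj2_sig L')).

Definition img_dclos {d1 d2 : Order.disp_t} {S1 : porderType d1} {S2 : porderType d2}
  (p : S1 -> S2) (L : S1 -> Prop) : S2 -> Prop :=
  fun y => exists2 x, L x & y <= p x.

Lemma fg_lower_img {d1 d2 : Order.disp_t} {S1 : porderType d1} {S2 : porderType d2}
  (p : S1 -> S2) (hp : {homo p : x y / x <= y}) (L : S1 -> Prop) :
  fg_lower L -> fg_lower (img_dclos p L).
Proof.
move=> [F ->]; exists (map p F).
apply: functional_extensionality => y; apply: propositional_extensionality.
split.
- move=> [x [z zF xz] yx]; exists (p z); first exact: map_f.
  exact: le_trans yx (hp _ _ xz).
- move=> [z /mapP [x xF ->] yz]; exists x => //; exists x => //.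
Qed.

(* Bp : B(S1) -> B(S2); it sends the downward closure of a finite F to the
   downward closure of p(F) (= downward closure of p(down F), p monotone). *)
Definition Bmap {d1 d2 : Order.disp_t} {S1 : porderType d1} {S2 : porderType d2}
  (p : S1 -> S2) (hp : {homo p : x y / x <= y}) (L : BS S1) : BS S2 :=
  exist _ (img_dclos p (BSval L)) (fg_lower_img hp (proj2_sig L)).

Lemma Bmap_dclos {d1 d2 : Order.disp_t} {S1 : porderType d1} {S2 : porderType d2}
  (p : S1 -> S2) (hp : {homo p : x y / x <= y}) (F : seq S1) (hF : fg_lower (dclos F)) :
  BSval (Bmap hp (exist _ (dclos F) hF)) = dclos (map p F).
Proof.
apply: functional_extensionality => y; apply: propositional_extensionality.
split.
- move=> [x [z zF xz] yx]; exists (p z); first exact: map_f.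
  exact: le_trans yx (hp _ _ xz).
- move=> [z /mapP [x xF ->] yz]; exists x => //; exists x => //.
Qed.

From mathcomp Require Import all_boot all_order.
From Stdlib Require Import FunctionalExtensionality PropExtensionality ProofIrrelevance.
Set Implicit Arguments.
Unset Strict Implicit.
Import Order.Theory.
Local Open Scope order_scope.

(* A monotone section sigma of Bp must be the preimage map L' |-> p^-1(L').
   Indeed sigma(down(p x)) contains some z with p x <= p z, while
   Bp(sigma(down(p x))) = down(p x) gives p z <= p x; injectivity of p forces
   z = x, and monotonicity of sigma then puts x in sigma L' whenever p x is
   in L'.  Taking preimages preserves the empty set and unions, and is right
   adjoint to taking down-closed images. *)

Lemma BS_ext {d : Order.disp_t} {S : porderType d} (L1 L2 : BS S) :
  (forall x, BSval L1 x <-> BSval L2 x) -> L1 = L2.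
Proof.
case: L1 L2 => [A hA] [B hB] /= eqAB.
have eAB : A = B.
  by apply: functional_extensionality => x; apply: propositional_extensionality.
by subst B; congr exist; apply: proof_irrelevance.
Qed.

Lemma BS_down {d : Order.disp_t} {S : porderType d} (L : BS S) (x y : S) :
  BSval L x -> y <= x -> BSval L y.
Proof.
case: L => [A [F eAF]] /=; rewrite eAF => -[z zF xz] yx.
by exists z => //; exact: le_trans yx xz.
Qed.

Definition BSprincipal {d : Order.disp_t} {S : porderType d} (a : S) : BS S :=
  exist _ (dclos [:: a]) (ex_intro _ [:: a] erefl).

Lemma BSprincipalE {d : Order.disp_t} {S : porderType d} (a x : S) :
  BSval (BSprincipal a) x <-> x <= a.
Proof.
by split=> [[y] | xa]; [rewrite inE => /eqP -> | exists a; rewrite ?inE].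
Qed.

Lemma BSprincipal_le {d : Order.disp_t} {S : porderType d} {a : S} {L : BS S} :
  BSval L a -> BSle (BSprincipal a) L.
Proof. by move=> La x /BSprincipalE; apply: BS_down. Qed.

Lemma mem_Bmap {d1 d2 : Order.disp_t} {S1 : porderType d1} {S2 : porderType d2}
  {p : S1 -> S2} (hp : {homo p : x y / x <= y}) {L : BS S1} {x : S1} :
  BSval L x -> BSval (Bmap hp L) (p x).
Proof. by exists x. Qed.

Section MonotoneSection.

Variables (d1 d2 : Order.disp_t) (S1 : porderType d1) (S2 : porderType d2).
Variables (p : S1 -> S2) (hp : {homo p : x y / x <= y}).
Hypothesis p_inj : injective p.
Variable sigma : BS S2 -> BS S1.
Hypothesis sigma_mono : forall L L' : BS S2, BSle L L' -> BSle (sigma L) (sigma L').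
Hypothesis sigma_sec : forall L' : BS S2, Bmap hp (sigma L') = L'.

Lemma mem_section_principal (x : S1) : BSval (sigma (BSprincipal (p x))) x.
Proof.
have : BSval (Bmap hp (sigma (BSprincipal (p x)))) (p x).
  by rewrite sigma_sec; apply/(BSprincipalE (p x) (p x)).
move=> [z sz pxz].
have := mem_Bmap hp sz; rewrite sigma_sec => /BSprincipalE pzx.
have pzE : p z = p x by apply/eqP; rewrite eq_le pzx pxz.
by rewrite -(p_inj pzE) in sz *.
Qed.

Lemma mem_section (L' : BS S2) (x : S1) : BSval (sigma L') x <-> BSval L' (p x).
Proof.
split=> [sx | L'px].
- by rewrite -(sigma_sec L'); exact: mem_Bmap.
- exact: sigma_mono (BSprincipal_le L'px) x (mem_section_principal x).
Qed.

Lemma section_adjoint (L : BS S1) (L' : BS S2) :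
  BSle L (sigma L') <-> BSle (Bmap hp L) L'.
Proof.
split=> [le_L y [x Lx yx] | le_BL x Lx].
- exact: BS_down (proj1 (mem_section L' x) (le_L x Lx)) yx.
- by apply/mem_section; apply: le_BL; exact: mem_Bmap.
Qed.

Lemma section_bot : sigma (BSbot S2) = BSbot S1.
Proof. by apply: BS_ext => x; rewrite mem_section; split; case. Qed.

Lemma section_join (L L' : BS S2) :
  sigma (BSjoin L L') = BSjoin (sigma L) (sigma L').
Proof. by apply: BS_ext => x; rewrite /= !mem_section. Qed.

End MonotoneSection.

Theorem mainTheorem8 (d1 d2 : Order.disp_t) (S1 : porderType d1) (S2 : porderType d2)
  (p : S1 -> S2) (hp : {homo p : x y / x <= y}) (pbij : bijective p)
  (sigma : BS S2 -> BS S1)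
  (sigma_mono : forall L L' : BS S2, BSle L L' -> BSle (sigma L) (sigma L'))
  (sigma_sec : forall L' : BS S2, Bmap hp (sigma L') = L') :
  (forall (L : BS S1) (L' : BS S2), BSle L (sigma L') <-> BSle (Bmap hp L) L')
  /\ sigma (BSbot S2) = BSbot S1
  /\ (forall L L' : BS S2, sigma (BSjoin L L') = BSjoin (sigma L) (sigma L')).
Proof.
have p_inj : injective p := bij_inj pbij.
split; [|split].
- exact: (section_adjoint p_inj sigma_mono sigma_sec).
- exact: (section_bot p_inj sigma_mono sigma_sec).
- exact: (section_join p_inj sigma_mono sigma_sec).
Qed.
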